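(* Let $(H,\mu_H,\Delta_H)$ be a bialgebra and $(A,\mu_A)$ a left $H$-module algebra in the usual sense, with action $h\otimes a\mapsto h\cdot a$. Let $\alpha_H:H\to H$ be a bijective bialgebra endomorphism and $\alpha_A:A\to A$ a bijective algebra endomorphism with $\alpha_A(h\cdot a)=\alpha_H(h)\cdot\alpha_A(a)$ for all $h\in H$, $a\in A$. Let $A\# H$ be the usual smash product, i.e. $A\otimes H$ with $(a\# h)(a'\# h')=a(h_1\cdot a')\# h_2h'$. Then $\alpha_A\otimes\alpha_H$ is an algebra endomorphism of $A\# H$, and the Hom-associative algebras $(A\# H)_{\alpha_A\otimes\alpha_H}$ and $A_{\alpha_A}\# H_{\alpha_H}$ coincide, where $A_{\alpha_A}\# H_{\alpha_H}$ is the Hom-smash product formed with respect to the action $h\triangleright a:=\alpha_A(h\cdot a)$ of the Hom-bialgebra $H_{\alpha_H}$ on $A_{\alpha_A}$.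
   Context: Algebras and coalgebras over a field $k$ are not assumed (co)unital; a bialgebra here is an associative algebra with a coassociative comultiplication $\Delta(h)=h_1\otimes h_2$ that is multiplicative; a left $H$-module algebra satisfies $(hh')\cdot a=h\cdot(h'\cdot a)$ and $h\cdot(aa')=(h_1\cdot a)(h_2\cdot a')$. For an associative algebra $(A,\mu)$ with algebra endomorphism $\alpha$, $A_\alpha=(A,\alpha\circ\mu,\alpha)$ (a Hom-associative algebra: $\alpha(aa')=\alpha(a)\alpha(a')$, $\alpha(a)(a'a'')=(aa')\alpha(a'')$). $H_{\alpha_H}=(H,\alpha_H\circ\mu_H,\Delta_H\circ\alpha_H,\alpha_H)$ is a Hom-bialgebra, and $A_{\alpha_A}$ is a left $H_{\alpha_H}$-module Hom-algebra via $\triangleright$ (known facts). For a Hom-bialgebra $(H,\mu_H,\Delta_H,\alpha_H)$ with $\Delta_H(h)=h_1\otimes h_2$ and a left $H$-module Hom-algebra $(A,\mu_A,\alpha_A)$ with action $\cdot$ and $\alpha_H,\alpha_A$ bijective, the Hom-smash product $A\# H$ is $A\otimes H$ with structure map $\alpha_A\otimes\alpha_H$ and multiplication $(a\# h)(a'\# h')=a(\alpha_H^{-2}(h_1)\cdot\alpha_A^{-1}(a'))\#\alpha_H^{-1}(h_2)h'$ (a Hom-associative algebra). *)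

(* Vector spaces over a field k are lmodType k; (co)algebras are
   NOT assumed (co)unital, so multiplications are plain bilinear maps.
   Tensor products are given by their universal property (is_tensor), and
   linear maps out of a tensor product are obtained with tlift. *)
From HB Require Import structures.
From mathcomp Require Import all_boot all_algebra.
From Stdlib Require Import ClassicalEpsilon.
Set Implicit Arguments. Unset Strict Implicit. Unset Printing Implicit Defensive.
Import GRing.Theory.
Local Open Scope ring_scope.

Definition is_bilin (k : fieldType) (U V W : lmodType k) (f : U -> V -> W) : Prop :=
  (forall v, linear (fun u => f u v)) /\ (forall u, linear (f u)).

Definition is_tensor (k : fieldType) (U V T : lmodType k) (t : U -> V -> T) : Prop :=
  is_bilin t /\
  forall (W : lmodType k) (f : U -> V -> W), is_bilin f ->
    exists g : T -> W, [/\ linear g, (forall u v, g (t u v) = f u v) &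
      forall g' : T -> W, linear g' -> (forall u v, g' (t u v) = f u v) -> g' =1 g].

Definition tlift (k : fieldType) (U V T W : lmodType k) (t : U -> V -> T)
  (f : U -> V -> W) : T -> W :=
  epsilon (inhabits (fun _ : T => (0 : W)))
    (fun g => linear g /\ forall u v, g (t u v) = f u v).

Definition tmap (k : fieldType) (U V T U' V' T' : lmodType k) (t : U -> V -> T)
  (t' : U' -> V' -> T') (f : U -> U') (g : V -> V') : T -> T' :=
  tlift t (fun u v => t' (f u) (g v)).

Definition is_algebra (k : fieldType) (A : lmodType k) (mu : A -> A -> A) : Prop :=
  is_bilin mu /\ associative mu.

Definition tensor_mul (k : fieldType) (H HH : lmodType k) (tHH : H -> H -> HH)
  (muH : H -> H -> H) : HH -> HH -> HH :=
  fun s s' => tlift tHH (fun x y => tlift tHH (fun x' y' => tHH (muH x x') (muH y y')) s') s.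

Definition is_bialgebra (k : fieldType) (H HH HHH : lmodType k)
  (tHH : H -> H -> HH) (tHHH : HH -> H -> HHH)
  (muH : H -> H -> H) (Delta : H -> HH) : Prop :=
  [/\ is_algebra muH, linear Delta,
   (* coassociativity (Delta (x) id) Delta = assoc o (id (x) Delta) Delta *)
   (forall h, tlift tHH (fun x y => tHHH (Delta x) y) (Delta h) =
              tlift tHH (fun x y => tlift tHH (fun z w => tHHH (tHH x z) w) (Delta y)) (Delta h))
   & (forall h h', Delta (muH h h') = tensor_mul tHH muH (Delta h) (Delta h'))].

Definition is_module_algebra (k : fieldType) (H HH A : lmodType k)
  (tHH : H -> H -> HH) (muH : H -> H -> H) (Delta : H -> HH)
  (muA : A -> A -> A) (act : H -> A -> A) : Prop :=
  [/\ is_bilin act,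
   (forall h h' a, act (muH h h') a = act h (act h' a)) &
   (forall h a a', act h (muA a a') =
      tlift tHH (fun x y => muA (act x a) (act y a')) (Delta h))].

Definition smash_mul (k : fieldType) (H HH A AH : lmodType k)
  (tHH : H -> H -> HH) (tAH : A -> H -> AH)
  (muA : A -> A -> A) (muH : H -> H -> H) (Delta : H -> HH) (act : H -> A -> A)
  : AH -> AH -> AH :=
  fun s s' => tlift tAH (fun a h => tlift tAH (fun a' h' =>
     tlift tHH (fun x y => tAH (muA a (act x a')) (muH y h')) (Delta h)) s') s.

(* Hom-smash product: (a#h)(a'#h') = a(alH^-2(h_1).alA^-1(a')) # alH^-1(h_2) h',
   alAi, alHi being the inverses of the structure maps alA, alH *)
Definition hom_smash_mul (k : fieldType) (H HH A AH : lmodType k)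
  (tHH : H -> H -> HH) (tAH : A -> H -> AH)
  (muA : A -> A -> A) (muH : H -> H -> H) (Delta : H -> HH) (act : H -> A -> A)
  (alAi : A -> A) (alHi : H -> H) : AH -> AH -> AH :=
  fun s s' => tlift tAH (fun a h => tlift tAH (fun a' h' =>
     tlift tHH (fun x y => tAH (muA a (act (alHi (alHi x)) (alAi a')))
                               (muH (alHi y) h')) (Delta h)) s') s.

(* B_alpha = (B, alpha o mu, alpha): its multiplication *)
Definition twist_mul (T : Type) (alpha : T -> T) (mu : T -> T -> T) : T -> T -> T :=
  fun x y => alpha (mu x y).

Definition twist_comul (H HH : Type) (Delta : H -> HH) (alpha : H -> H) : H -> HH :=
  fun h => Delta (alpha h).

Definition hom_action (H A : Type) (alA : A -> A) (act : H -> A -> A) : H -> A -> A :=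
  fun h a => alA (act h a).

(* Both identities are between maps that are linear in each argument, so by the
   universal property of the tensor product it suffices to check them on pure
   tensors [a # h] and [a' # h'].  There both sides are [tlift] of [Delta h]
   (using [Delta o alH = (alH (x) alH) o Delta]), and the remaining identity
   between the summands is a direct consequence of the compatibilities of
   [alA] and [alH] with the multiplications and the action. *)

From HB Require Import structures.
From mathcomp Require Import all_boot all_algebra.
From Stdlib Require Import ClassicalEpsilon.
Set Implicit Arguments. Unset Strict Implicit. Unset Printing Implicit Defensive.
Import GRing.Theory.
Local Open Scope ring_scope.

Section Linearity.
Variable k : fieldType.

Lemma linear_comp (U V W : lmodType k) (g : V -> W) (f : U -> V) :
  linear g -> linear f -> linear (fun x => g (f x)).
Proof. by move=> g_lin f_lin c u v; rewrite f_lin g_lin. Qed.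

Lemma linear_can2 (U V : lmodType k) (f : U -> V) (g : V -> U) :
  linear f -> cancel f g -> cancel g f -> linear g.
Proof. by move=> f_lin fK gK c u v; rewrite -{1}(gK u) -{1}(gK v) -f_lin fK. Qed.

Lemma bilin_comp (U V W W' : lmodType k) (f : U -> V -> W) (g : W -> W') :
  is_bilin f -> linear g -> is_bilin (fun u v => g (f u v)).
Proof.
by move=> [fl fr] g_lin; split=> x; [apply: linear_comp g_lin (fl _) |
  apply: linear_comp g_lin (fr _)].
Qed.

Lemma bilin_precomp (U V U' V' W : lmodType k) (f : U -> V -> W)
    (p : U' -> U) (q : V' -> V) :
  is_bilin f -> linear p -> linear q -> is_bilin (fun u v => f (p u) (q v)).
Proof.
by move=> [fl fr] p_lin q_lin; split=> x; [apply: linear_comp (fl _) p_lin |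
  apply: linear_comp (fr _) q_lin].
Qed.

End Linearity.

Section TensorLift.
Variables (k : fieldType) (U V T : lmodType k) (t : U -> V -> T).
Hypothesis t_tensor : is_tensor t.

Lemma tlift_spec (W : lmodType k) (f : U -> V -> W) : is_bilin f ->
  linear (tlift t f) /\ forall u v, tlift t f (t u v) = f u v.
Proof.
move=> f_bilin; apply: (epsilon_spec (inhabits (fun _ : T => (0 : W)))
  (fun g => linear g /\ forall u v, g (t u v) = f u v)).
by have [_ /(_ W f f_bilin) [g [g_lin g_tensor _]]] := t_tensor; exists g.
Qed.

Lemma linear_tlift (W : lmodType k) (f : U -> V -> W) :
  is_bilin f -> linear (tlift t f).
Proof. by case/tlift_spec. Qed.

Lemma tlift_tensor (W : lmodType k) (f : U -> V -> W) u v :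
  is_bilin f -> tlift t f (t u v) = f u v.
Proof. by case/tlift_spec. Qed.

Lemma tensor_ext (W : lmodType k) (g1 g2 : T -> W) :
  linear g1 -> linear g2 -> (forall u v, g1 (t u v) = g2 (t u v)) -> g1 =1 g2.
Proof.
move=> g1_lin g2_lin g12 x.
have [t_bilin t_univ] := t_tensor.
have [g [_ _ g_uniq]] := t_univ W _ (bilin_comp t_bilin g1_lin).
by rewrite (g_uniq g1) // (g_uniq g2) // => u v; rewrite g12.
Qed.

Lemma tlift_ext (W : lmodType k) (f1 f2 : U -> V -> W) :
  is_bilin f1 -> is_bilin f2 -> (forall u v, f1 u v = f2 u v) ->
  tlift t f1 =1 tlift t f2.
Proof.
move=> f1_bilin f2_bilin f12; apply: tensor_ext; try exact: linear_tlift.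
by move=> u v; rewrite !tlift_tensor.
Qed.

Lemma linear_tlift_comp (W W' : lmodType k) (f : U -> V -> W) (g : W -> W') x :
  is_bilin f -> linear g -> g (tlift t f x) = tlift t (fun u v => g (f u v)) x.
Proof.
move=> f_bilin g_lin; have fg_bilin := bilin_comp f_bilin g_lin.
move: x; apply: tensor_ext => [||u v]; last by rewrite !tlift_tensor.
  exact: linear_comp (linear_tlift _).
exact: linear_tlift.
Qed.

Lemma linear_tlift_param (P W : lmodType k) (f : P -> U -> V -> W) x :
  (forall p, is_bilin (f p)) -> (forall u v, linear (fun p => f p u v)) ->
  linear (fun p => tlift t (f p) x).
Proof.
move=> f_bilin f_lin c p1 p2.
have comb_lin : linear (fun x => c *: tlift t (f p1) x + tlift t (f p2) x).
  move=> d u v; rewrite !linear_tlift // !scalerDr !scalerA mulrC addrACA.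
  by rewrite -scalerA.
move: x; apply: tensor_ext => [||u v]; [exact: linear_tlift | exact: comb_lin |].
by rewrite !tlift_tensor // f_lin.
Qed.

Lemma bilin_tlift_param (P Q W : lmodType k) (f : P -> Q -> U -> V -> W) x :
  (forall p q, is_bilin (f p q)) -> (forall u v, is_bilin (fun p q => f p q u v)) ->
  is_bilin (fun p q => tlift t (f p q) x).
Proof.
move=> f_bilin fp_bilin; split=> [q|p]; apply: linear_tlift_param => // u v.
  exact: (fp_bilin u v).1.
exact: (fp_bilin u v).2.
Qed.

End TensorLift.

Lemma tensor_ext2 (k : fieldType) (U V T U' V' T' W : lmodType k)
    (t : U -> V -> T) (t' : U' -> V' -> T') (m1 m2 : T -> T' -> W) :
  is_tensor t -> is_tensor t' -> is_bilin m1 -> is_bilin m2 ->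
  (forall u v u' v', m1 (t u v) (t' u' v') = m2 (t u v) (t' u' v')) ->
  forall x y, m1 x y = m2 x y.
Proof.
move=> t_tensor t'_tensor [m1l m1r] [m2l m2r] m12 x y.
move: x; apply: (tensor_ext t_tensor) => // u v.
by move: y; apply: (tensor_ext t'_tensor).
Qed.

Section TensorMap.
Variables (k : fieldType) (U V T U' V' T' : lmodType k).
Variables (t : U -> V -> T) (t' : U' -> V' -> T') (p : U -> U') (q : V -> V').
Hypotheses (t_tensor : is_tensor t) (t'_tensor : is_tensor t').
Hypotheses (p_lin : linear p) (q_lin : linear q).

Let pq_bilin : is_bilin (fun u v => t' (p u) (q v)).
Proof. by apply: bilin_precomp => //; case: t'_tensor. Qed.

Lemma linear_tmap : linear (tmap t t' p q).
Proof. exact: linear_tlift. Qed.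

Lemma tmap_tensor u v : tmap t t' p q (t u v) = t' (p u) (q v).
Proof. exact: tlift_tensor. Qed.

Lemma tlift_tmap (W : lmodType k) (f : U' -> V' -> W) x : is_bilin f ->
  tlift t' f (tmap t t' p q x) = tlift t (fun u v => f (p u) (q v)) x.
Proof.
move=> f_bilin; have fpq_bilin := bilin_precomp f_bilin p_lin q_lin.
move: x; apply: (tensor_ext t_tensor) => [||u v].
- exact: linear_comp (linear_tlift t'_tensor f_bilin) linear_tmap.
- exact: linear_tlift.
by rewrite tmap_tensor !tlift_tensor.
Qed.

End TensorMap.

Section SmashProduct.
Variables (k : fieldType) (H HH A AH : lmodType k).
Variables (tHH : H -> H -> HH) (tAH : A -> H -> AH).
Variables (muA : A -> A -> A) (muH : H -> H -> H) (Delta : H -> HH) (act : H -> A -> A).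
Hypotheses (tHH_tensor : is_tensor tHH) (tAH_tensor : is_tensor tAH).
Hypotheses (muA_bilin : is_bilin muA) (muH_bilin : is_bilin muH).
Hypotheses (Delta_lin : linear Delta) (act_bilin : is_bilin act).

Let tAH_bilin : is_bilin tAH. Proof. by case: tAH_tensor. Qed.

Lemma smash_summand_bilin a a' h' :
  is_bilin (fun x y => tAH (muA a (act x a')) (muH y h')).
Proof.
split=> [y|x].
  exact: linear_comp (tAH_bilin.1 _) (linear_comp (muA_bilin.2 a) (act_bilin.1 a')).
exact: linear_comp (tAH_bilin.2 _) (muH_bilin.1 h').
Qed.

Let summand_bilin_left x y h' :
  is_bilin (fun a a' => tAH (muA a (act x a')) (muH y h')).
Proof.
split=> [a'|a]; apply: linear_comp (tAH_bilin.1 _) _; first exact: muA_bilin.1.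
exact: linear_comp (muA_bilin.2 a) (act_bilin.2 x).
Qed.

Let factor a h a' h' :=
  tlift tHH (fun x y => tAH (muA a (act x a')) (muH y h')) (Delta h).

Let factor_bilin_right a h : is_bilin (factor a h).
Proof.
apply: (bilin_tlift_param tHH_tensor) => [a' h'|x y]; first exact: smash_summand_bilin.
split=> [h'|a'].
  exact: (summand_bilin_left x y h').2.
exact: linear_comp (tAH_bilin.2 _) (muH_bilin.2 y).
Qed.

Let factor_bilin_left a' h' : is_bilin (fun a h => factor a h a' h').
Proof.
split=> [h|a].
  apply: (linear_tlift_param tHH_tensor) => [a|x y]; first exact: smash_summand_bilin.
  exact: (summand_bilin_left x y h').1.
exact: linear_comp (linear_tlift tHH_tensor (smash_summand_bilin a a' h')) Delta_lin.
Qed.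

Let outer_bilin s' : is_bilin (fun a h => tlift tAH (factor a h) s').
Proof. exact: (bilin_tlift_param tAH_tensor). Qed.

Lemma smash_mul_tensor a h a' h' :
  smash_mul tHH tAH muA muH Delta act (tAH a h) (tAH a' h') =
  tlift tHH (fun x y => tAH (muA a (act x a')) (muH y h')) (Delta h).
Proof.
rewrite /smash_mul (tlift_tensor tAH_tensor _ _ (outer_bilin _)).
exact: (tlift_tensor tAH_tensor _ _ (factor_bilin_right a h)).
Qed.

Lemma smash_mul_bilin : is_bilin (smash_mul tHH tAH muA muH Delta act).
Proof.
split=> [s'|s]; first exact: (linear_tlift tAH_tensor).
apply: (linear_tlift_param tAH_tensor) => // a h.
exact: (linear_tlift tAH_tensor (factor_bilin_right a h)).
Qed.

End SmashProduct.

Lemma hom_smash_mulE (k : fieldType) (H HH A AH : lmodType k)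
    (tHH : H -> H -> HH) (tAH : A -> H -> AH) (muA : A -> A -> A)
    (muH : H -> H -> H) (Delta : H -> HH) (act : H -> A -> A)
    (alAi : A -> A) (alHi : H -> H) :
  hom_smash_mul tHH tAH muA muH Delta act alAi alHi =
  smash_mul tHH tAH muA (fun y h => muH (alHi y) h) Delta
    (fun x a => act (alHi (alHi x)) (alAi a)).
Proof. by []. Qed.

Section TwistedSmashProduct.
Variables (k : fieldType) (H HH A AH : lmodType k).
Variables (tHH : H -> H -> HH) (tAH : A -> H -> AH).
Variables (muA : A -> A -> A) (muH : H -> H -> H) (Delta : H -> HH) (act : H -> A -> A).
Variables (alH : H -> H) (alA : A -> A).
Hypotheses (tHH_tensor : is_tensor tHH) (tAH_tensor : is_tensor tAH).
Hypotheses (muA_bilin : is_bilin muA) (muH_bilin : is_bilin muH).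
Hypotheses (Delta_lin : linear Delta) (act_bilin : is_bilin act).
Hypotheses (alH_lin : linear alH) (alA_lin : linear alA).
Hypothesis alH_Delta : forall h, Delta (alH h) = tmap tHH tHH alH alH (Delta h).
Hypothesis alA_act : forall h a, alA (act h a) = act (alH h) (alA a).

Local Notation alAH := (tmap tAH tAH alA alH).
Local Notation smash := (smash_mul tHH tAH muA muH Delta act).

Let alAH_lin : linear alAH := linear_tmap tAH_tensor tAH_tensor alA_lin alH_lin.

Let alAH_tensor a h : alAH (tAH a h) = tAH (alA a) (alH h).
Proof. exact: tmap_tensor. Qed.

Let twisted_summand_bilin a a' h' :
  is_bilin (fun x y => tAH (alA (muA a (act x a'))) (alH (muH y h'))).
Proof.
exact: (smash_summand_bilin tAH_tensor (bilin_comp muA_bilin alA_lin)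
  (bilin_comp muH_bilin alH_lin) act_bilin).
Qed.

Lemma tmap_smash_mul_tensor a h a' h' :
  alAH (smash (tAH a h) (tAH a' h')) =
  tlift tHH (fun x y => tAH (alA (muA a (act x a'))) (alH (muH y h'))) (Delta h).
Proof.
have summand_bilin := smash_summand_bilin tAH_tensor muA_bilin muH_bilin act_bilin.
rewrite smash_mul_tensor // (linear_tlift_comp tHH_tensor _ (summand_bilin _ _ _)) //.
apply: (tlift_ext tHH_tensor) => [||x y]; last exact: alAH_tensor.
  exact: bilin_comp (summand_bilin a a' h') alAH_lin.
exact: twisted_summand_bilin.
Qed.

Lemma bilin_tmap_smash_mul : is_bilin (fun s s' => alAH (smash s s')).
Proof. exact: bilin_comp (smash_mul_bilin _ _ _ _ _ _) alAH_lin. Qed.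

Lemma tmap_smash_mul :
    (forall h h', alH (muH h h') = muH (alH h) (alH h')) ->
    (forall a a', alA (muA a a') = muA (alA a) (alA a')) ->
  forall s s', alAH (smash s s') = smash (alAH s) (alAH s').
Proof.
move=> alH_mul alA_mul; apply: (tensor_ext2 tAH_tensor tAH_tensor) => [||a h a' h'].
- exact: bilin_tmap_smash_mul.
- exact: (bilin_precomp (smash_mul_bilin _ _ _ _ _ _) alAH_lin alAH_lin).
have summand_bilin := smash_summand_bilin tAH_tensor muA_bilin muH_bilin act_bilin.
rewrite tmap_smash_mul_tensor !alAH_tensor smash_mul_tensor // alH_Delta.
rewrite (tlift_tmap tHH_tensor tHH_tensor alH_lin alH_lin _ (summand_bilin _ _ _)).
apply: (tlift_ext tHH_tensor) => [||x y]; first exact: twisted_summand_bilin.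
  exact: (bilin_precomp (summand_bilin _ _ _) alH_lin alH_lin).
by rewrite alA_mul alA_act alH_mul.
Qed.

Lemma tmap_smash_mul_hom_smash_mul (alHi : H -> H) (alAi : A -> A) :
    cancel alH alHi -> cancel alHi alH -> cancel alA alAi -> cancel alAi alA ->
  forall s s', alAH (smash s s') =
    hom_smash_mul tHH tAH (twist_mul alA muA) (twist_mul alH muH)
      (twist_comul Delta alH) (hom_action alA act) alAi alHi s s'.
Proof.
move=> alHK alHiK alAK alAiK.
have alHi_lin := linear_can2 alH_lin alHK alHiK.
have alAi_lin := linear_can2 alA_lin alAK alAiK.
have muA'_bilin : is_bilin (fun a b => alA (muA a b)) := bilin_comp muA_bilin alA_lin.
have id_lin : linear (@id H) by [].
have muH'_bilin : is_bilin (fun y h => alH (muH (alHi y) h)).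
  exact: bilin_comp (bilin_precomp muH_bilin alHi_lin id_lin) alH_lin.
have act'_bilin : is_bilin (fun x a => alA (act (alHi (alHi x)) (alAi a))).
  have alHi2_lin := linear_comp alHi_lin alHi_lin.
  exact: bilin_comp (bilin_precomp act_bilin alHi2_lin alAi_lin) alA_lin.
have Delta'_lin : linear (fun h => Delta (alH h)) := linear_comp Delta_lin alH_lin.
have summand'_bilin := smash_summand_bilin tAH_tensor muA'_bilin muH'_bilin act'_bilin.
rewrite hom_smash_mulE /twist_mul /twist_comul /hom_action.
apply: (tensor_ext2 tAH_tensor tAH_tensor) => [||a h a' h'].
- exact: bilin_tmap_smash_mul.
- exact: smash_mul_bilin.
rewrite tmap_smash_mul_tensor smash_mul_tensor // alH_Delta.
rewrite (tlift_tmap tHH_tensor tHH_tensor alH_lin alH_lin _ (summand'_bilin _ _ _)).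
apply: (tlift_ext tHH_tensor) => [||x y]; first exact: twisted_summand_bilin.
  exact: (bilin_precomp (summand'_bilin _ _ _) alH_lin alH_lin).
by rewrite !alHK alA_act alHiK alAiK.
Qed.

End TwistedSmashProduct.

Theorem proposition3p3 (k : fieldType) (H HH HHH A AH : lmodType k)
  (tHH : H -> H -> HH) (tHHH : HH -> H -> HHH) (tAH : A -> H -> AH)
  (muH : H -> H -> H) (Delta : H -> HH) (muA : A -> A -> A) (act : H -> A -> A)
  (alH alHi : H -> H) (alA alAi : A -> A) :
  is_tensor tHH -> is_tensor tHHH -> is_tensor tAH ->
  is_bialgebra tHH tHHH muH Delta ->
  is_algebra muA ->
  is_module_algebra tHH muH Delta muA act ->
  (* alH : bijective bialgebra endomorphism *)
  linear alH -> cancel alH alHi -> cancel alHi alH ->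
  (forall h h', alH (muH h h') = muH (alH h) (alH h')) ->
  (forall h, Delta (alH h) = tmap tHH tHH alH alH (Delta h)) ->
  (* alA : bijective algebra endomorphism *)
  linear alA -> cancel alA alAi -> cancel alAi alA ->
  (forall a a', alA (muA a a') = muA (alA a) (alA a')) ->
  (forall h a, alA (act h a) = act (alH h) (alA a)) ->
  let alAH := tmap tAH tAH alA alH in
  let smash := smash_mul tHH tAH muA muH Delta act in
  (linear alAH /\ forall s s', alAH (smash s s') = smash (alAH s) (alAH s')) /\
  (forall s s', twist_mul alAH smash s s' =
     hom_smash_mul tHH tAH (twist_mul alA muA) (twist_mul alH muH)
       (twist_comul Delta alH) (hom_action alA act) alAi alHi s s').
Proof.
move=> tHH_tensor _ tAH_tensor [[muH_bilin _] Delta_lin _ _] [muA_bilin _]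
  [act_bilin _ _] alH_lin alHK alHiK alH_mul alH_Delta alA_lin alAK alAiK
  alA_mul alA_act.
split; first split.
- exact: linear_tmap.
- exact: tmap_smash_mul.
- exact: tmap_smash_mul_hom_smash_mul.
Qed.
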